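(* Assume the following hypothesis (Hypothesis H for generalized Fermat primes): for every integer $\lambda\ge 1$, $L(R,\lambda)\sim E(R,\lambda)$ as $R\to\infty$. Then for every integer $\lambda\ge 1$ there exists a bound $B_\lambda\ge 2^\lambda$ such that for every real $R>B_\lambda$ there is an integer $r\in[R,\,R(1+\lambda^2)]$ for which $r^{2^\lambda}+1$ is prime.
   Context: A generalized Fermat prime is a prime of the form $r^{2^\lambda}+1$ with integers $r\ge 2$, $\lambda\ge 1$. For real $R\ge 2$ and integer $\lambda\ge1$, $L(R,\lambda)$ denotes the number of integers $r$ with $2\le r\le R$ such that $r^{2^\lambda}+1$ is prime, and $$E(R,\lambda)=\frac{C_\lambda}{2^\lambda}\sum_{r=2}^{\lfloor R\rfloor}\frac{1}{\log r},$$ where $C_\lambda=\lim_{K\to\infty} t(K,\lambda)/u(K,\lambda)>0$ with $t(K,\lambda)=\prod_{1\le k\le K,\ k2^{\lambda+1}+1\text{ prime}}\bigl(1-\tfrac{2^\lambda}{k2^{\lambda+1}+1}\bigr)$ and $u(K,\lambda)=\prod_{p\text{ prime},\ p\le K2^{\lambda+1}+1}\bigl(1-\tfrac1p\bigr)$. Here $\log$ is the natural logarithm. *)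

From Stdlib Require Import Reals ZArith Znumtheory List Lia.
Open Scope R_scope.

Definition primeb (n : Z) : bool := if prime_dec n then true else false.

Definition gfermat (r : Z) (lam : nat) : Z := (r ^ (2 ^ Z.of_nat lam) + 1)%Z.

(* floor of a real, as a natural number (0 if negative) *)
Definition nfloor (x : R) : nat := Z.to_nat (Int_part x).

(* the integers r with 2 <= r <= floor R *)
Definition range2 (x : R) : list nat := seq 2 (nfloor x - 1).

Definition Lcount (x : R) (lam : nat) : nat :=
  length (filter (fun r => primeb (gfermat (Z.of_nat r) lam)) (range2 x)).

Definition Eapprox (C : R) (x : R) (lam : nat) : R :=
  C / 2 ^ lam * fold_right Rplus 0 (map (fun r => / ln (INR r)) (range2 x)).

Definition tprod (K lam : nat) : R :=
  fold_right Rmult 1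
    (map (fun k => 1 - 2 ^ lam / INR (k * 2 ^ (lam + 1) + 1))
       (filter (fun k => primeb (Z.of_nat (k * 2 ^ (lam + 1) + 1))) (seq 1 K))).

Definition uprod (K lam : nat) : R :=
  fold_right Rmult 1
    (map (fun p => 1 - / INR p)
       (filter (fun p => primeb (Z.of_nat p)) (seq 0 (K * 2 ^ (lam + 1) + 2)))).

Definition asymp (f g : R -> R) : Prop :=
  forall eps, 0 < eps -> exists x0, forall x, x >= x0 ->
    Rabs (f x / g x - 1) < eps.

Definition HypothesisH : Prop :=
  forall lam : nat, (1 <= lam)%nat ->
    exists C : R, 0 < C /\ Un_cv (fun K => tprod K lam / uprod K lam) C /\
      asymp (fun x => INR (Lcount x lam)) (fun x => Eapprox C x lam).

(* Write E(R, lam) = (C/2^lam) S(floor R), where S(N) is the sum of 1/ln r over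
   2 <= r <= N.  Since 1/ln(2m) >= (5/8)/ln m, S grows at least by a factor 5/4
   under doubling, up to an additive constant; as S diverges, S(M) >= (9/8) S(N)
   whenever M >= 2N and N is large.  Because L/E -> 1, a gain of 9/8 in E beats
   the error, so L(R(1 + lam^2), lam) > L(R, lam) for large R, and a new r in
   (R, R(1 + lam^2)] gives a prime r^(2^lam) + 1. *)
From Stdlib Require Import Reals ZArith Znumtheory List Lia Lra.
Open Scope R_scope.

Definition sum_inv_ln (N : nat) : R :=
  fold_right Rplus 0 (map (fun r => / ln (INR r)) (seq 2 (N - 1))).

Lemma Eapprox_sum_inv_ln C x lam :
  Eapprox C x lam = C / 2 ^ lam * sum_inv_ln (nfloor x).
Proof. reflexivity. Qed.

Lemma ln_le x y : 0 < x -> x <= y -> ln x <= ln y.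
Proof.
  intros Hx [Hxy | <-]; [left; apply ln_increasing | right]; auto.
Qed.

Lemma ln_nat_pos r : (2 <= r)%nat -> 0 < ln (INR r).
Proof.
  intros Hr. rewrite <- ln_1. apply ln_increasing; [lra|].
  apply le_INR in Hr. simpl in Hr. lra.
Qed.

Lemma inv_ln_nat_pos r : (2 <= r)%nat -> 0 < / ln (INR r).
Proof. intros Hr. apply Rinv_0_lt_compat, ln_nat_pos, Hr. Qed.

Lemma inv_ln_nat_le m n : (2 <= m)%nat -> (m <= n)%nat -> / ln (INR n) <= / ln (INR m).
Proof.
  intros Hm Hmn. apply Rinv_le_contravar; [apply ln_nat_pos, Hm|].
  apply ln_le; [|apply le_INR, Hmn]. apply le_INR in Hm. simpl in Hm. lra.
Qed.

Lemma fold_right_Rplus_init (l : list R) (a : R) :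
  fold_right Rplus a l = fold_right Rplus 0 l + a.
Proof. induction l as [|b l IHl]; simpl; [ring | rewrite IHl; ring]. Qed.

Lemma sum_inv_ln_S N : (1 <= N)%nat -> sum_inv_ln (S N) = sum_inv_ln N + / ln (INR (S N)).
Proof.
  intros HN. unfold sum_inv_ln.
  replace (S N - 1)%nat with (S (N - 1)) by lia.
  rewrite seq_S, map_app, fold_right_app. cbn [map fold_right].
  rewrite fold_right_Rplus_init. replace (2 + (N - 1))%nat with (S N) by lia. ring.
Qed.

Lemma sum_inv_ln_le N M : (1 <= N)%nat -> (N <= M)%nat -> sum_inv_ln N <= sum_inv_ln M.
Proof.
  intros HN HNM. induction HNM as [|M HNM IH]; [lra|].
  rewrite sum_inv_ln_S by lia. pose proof (inv_ln_nat_pos (S M) ltac:(lia)). lra.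
Qed.

Lemma sum_inv_ln_pos N : (2 <= N)%nat -> 0 < sum_inv_ln N.
Proof.
  intros HN. apply Rlt_le_trans with (sum_inv_ln 2); [|apply sum_inv_ln_le; lia].
  rewrite sum_inv_ln_S by lia.
  replace (sum_inv_ln 1) with 0 by reflexivity.
  pose proof (inv_ln_nat_pos 2 ltac:(lia)). lra.
Qed.

(* Each of the [n] terms of [S (n+1)] dominates the last one. *)
Lemma sum_inv_ln_ge_last n : INR n * / ln (INR (S n)) <= sum_inv_ln (S n).
Proof.
  induction n as [|n IH]; [unfold sum_inv_ln; simpl; lra|].
  rewrite sum_inv_ln_S, S_INR by lia.
  assert (INR n * / ln (INR (S (S n))) <= INR n * / ln (INR (S n))).
  { destruct n; [simpl; lra|].
    apply Rmult_le_compat_l; [apply pos_INR | apply inv_ln_nat_le; lia]. }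
  lra.
Qed.

Lemma ln_lt_2_sqrt x : 0 < x -> ln x < 2 * sqrt x.
Proof.
  intros Hx. pose proof (sqrt_lt_R0 x Hx) as Hs.
  rewrite <- (sqrt_sqrt x) at 1 by lra. rewrite ln_mult by lra.
  enough (ln (sqrt x) < sqrt x) by lra.
  pose proof (exp_ineq1 (sqrt x) ltac:(lra)).
  rewrite <- (ln_exp (sqrt x)) at 2. apply ln_increasing; lra.
Qed.

Lemma sum_inv_ln_ge_sqrt N : (2 <= N)%nat -> sqrt (INR N) / 4 <= sum_inv_ln N.
Proof.
  intros HN. destruct N as [|n]; [lia|].
  pose proof (sum_inv_ln_ge_last n) as Hlast.
  assert (Hn : 1 <= INR n) by (apply (le_INR 1); lia).
  set (s := sqrt (INR (S n))) in *.
  assert (Hs : 0 < s) by (apply sqrt_lt_R0; rewrite S_INR; lra).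
  assert (Hss : s * s = INR (S n)) by (apply sqrt_sqrt; rewrite S_INR; lra).
  assert (Hinv : / (2 * s) <= / ln (INR (S n))).
  { apply Rinv_le_contravar; [apply ln_nat_pos; lia|].
    left; apply ln_lt_2_sqrt; rewrite S_INR; lra. }
  assert (s * s / 2 * / (2 * s) <= INR n * / ln (INR (S n))).
  { apply Rmult_le_compat; try lra.
    - apply Rmult_le_pos; [nra | lra].
    - left; apply Rinv_0_lt_compat; lra.
    - rewrite S_INR in Hss. lra. }
  replace (s * s / 2 * / (2 * s)) with (s / 4) in * by (field; lra).
  lra.
Qed.

Lemma sum_inv_ln_unbounded K : exists N0, forall N, (N0 <= N)%nat -> K <= sum_inv_ln N.
Proof.
  destruct (INR_archimed 1 (16 * K * K + 2)) as [N0 HN0]; [lra|].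
  exists N0. intros N HN. apply le_INR in HN.
  assert (HN2 : (2 <= N)%nat) by (apply INR_le; simpl; nra).
  assert (4 * K <= sqrt (INR N)).
  { apply Rle_trans with (sqrt (Rsqr (4 * K))).
    - rewrite sqrt_Rsqr_abs. apply Rle_abs.
    - apply sqrt_le_1_alt. unfold Rsqr. nra. }
  pose proof (sum_inv_ln_ge_sqrt N HN2). lra.
Qed.

(* [1/ln(2m) >= (5/8)/ln m] amounts to [3 ln m >= 5 ln 2], i.e. [m^3 >= 2^5]. *)
Lemma inv_ln_double m : (4 <= m)%nat -> 5 / 4 * / ln (INR m) <= 2 * / ln (INR (2 * m)).
Proof.
  intros Hm. rewrite mult_INR. replace (INR 2) with 2 by reflexivity.
  assert (Hm' : 4 <= INR m) by (apply le_INR in Hm; simpl in Hm; lra).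
  rewrite ln_mult by lra.
  pose proof (ln_nat_pos m ltac:(lia)) as Hb.
  assert (Ha : 0 < ln 2) by (rewrite <- ln_1; apply ln_increasing; lra).
  assert (5 * ln 2 < 3 * ln (INR m)).
  { replace 5 with (INR 5) by (simpl; ring). replace 3 with (INR 3) by (simpl; ring).
    rewrite <- !ln_pow by lra. apply ln_increasing; simpl; nra. }
  apply Rmult_le_reg_r with (4 * ln (INR m) * (ln 2 + ln (INR m))); [nra|].
  replace (5 / 4 * / ln (INR m) * (4 * ln (INR m) * (ln 2 + ln (INR m))))
    with (5 * (ln 2 + ln (INR m))) by (field; lra).
  replace (2 * / (ln 2 + ln (INR m)) * (4 * ln (INR m) * (ln 2 + ln (INR m))))
    with (8 * ln (INR m)) by (field; lra).
  lra.
Qed.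

Lemma sum_inv_ln_double N :
  (3 <= N)%nat -> 5 / 4 * sum_inv_ln N - 5 / 4 * sum_inv_ln 3 <= sum_inv_ln (2 * N).
Proof.
  intros HN. induction HN as [|N HN IH].
  - pose proof (sum_inv_ln_pos 6 ltac:(lia)). simpl (2 * 3)%nat. lra.
  - replace (2 * S N)%nat with (S (S (2 * N))) by lia.
    rewrite (sum_inv_ln_S N), (sum_inv_ln_S (S (2 * N))), (sum_inv_ln_S (2 * N)) by lia.
    pose proof (inv_ln_nat_le (S (2 * N)) (S (S (2 * N))) ltac:(lia) ltac:(lia)).
    pose proof (inv_ln_double (S N) ltac:(lia)) as Hd.
    replace (2 * S N)%nat with (S (S (2 * N))) in Hd by lia.
    lra.
Qed.

Lemma sum_inv_ln_growth :
  exists N1, forall N M, (N1 <= N)%nat -> (2 * N <= M)%nat ->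
    9 / 8 * sum_inv_ln N <= sum_inv_ln M.
Proof.
  destruct (sum_inv_ln_unbounded (10 * sum_inv_ln 3)) as [N0 HN0].
  exists (Nat.max N0 3). intros N M HN HM.
  pose proof (HN0 N ltac:(lia)).
  pose proof (sum_inv_ln_double N ltac:(lia)).
  pose proof (sum_inv_ln_le (2 * N) M ltac:(lia) HM).
  lra.
Qed.

(* With [eps = (q-1)/(q+1)] one has [(1+eps) = q (1-eps)]. *)
Lemma asymp_lt_of_ratio_ge f g q : 1 < q -> asymp f g ->
  exists x0, forall x y, x >= x0 -> y >= x0 -> 0 < g x -> q * g x <= g y -> f x < f y.
Proof.
  intros Hq Hfg.
  destruct (Hfg ((q - 1) / (q + 1))) as [x0 Hx0].
  { apply Rdiv_lt_0_compat; lra. }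
  exists x0. intros x y Hx Hy Hgx Hgxy.
  assert (Hgy : 0 < g y) by nra.
  destruct (Rabs_def2 _ _ (Hx0 x Hx)) as [Hfx _].
  destruct (Rabs_def2 _ _ (Hx0 y Hy)) as [_ Hfy].
  assert (Hqx : f x < 2 * q / (q + 1) * g x).
  { apply Rmult_lt_reg_r with (/ g x); [apply Rinv_0_lt_compat, Hgx|].
    replace (2 * q / (q + 1) * g x * / g x) with (2 * q / (q + 1)) by (field; lra).
    replace (2 * q / (q + 1)) with (1 + (q - 1) / (q + 1)) by (field; lra).
    unfold Rdiv in Hfx. lra. }
  assert (Hqy : 2 / (q + 1) * g y < f y).
  { apply Rmult_lt_reg_r with (/ g y); [apply Rinv_0_lt_compat, Hgy|].
    replace (2 / (q + 1) * g y * / g y) with (2 / (q + 1)) by (field; lra).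
    replace (2 / (q + 1)) with (1 - (q - 1) / (q + 1)) by (field; lra).
    unfold Rdiv in Hfy. lra. }
  assert (2 * q / (q + 1) * g x <= 2 / (q + 1) * g y).
  { replace (2 * q / (q + 1) * g x) with (2 / (q + 1) * (q * g x)) by (field; lra).
    apply Rmult_le_compat_l; [apply Rlt_le, Rdiv_lt_0_compat|]; lra. }
  lra.
Qed.

Lemma nfloor_spec x : 0 <= x -> x - 1 < INR (nfloor x) <= x.
Proof.
  intros Hx. unfold nfloor. destruct (base_Int_part x) as [H1 H2].
  assert (Hz : (-1 < Int_part x)%Z) by (apply lt_IZR; lra).
  rewrite INR_IZR_INZ, Z2Nat.id by lia. lra.
Qed.

Lemma nfloor_ge n x : INR n <= x -> (n <= nfloor x)%nat.
Proof.
  intros Hn. pose proof (pos_INR n).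
  destruct (nfloor_spec x ltac:(lra)) as [Hlow _].
  assert (INR n < INR (S (nfloor x))) by (rewrite S_INR; lra).
  apply INR_lt in H0. lia.
Qed.

Lemma Lcount_lt_gfermat_prime x y lam : 0 <= x -> x <= y ->
  (Lcount x lam < Lcount y lam)%nat ->
  exists r : Z, x < IZR r <= y /\ prime (gfermat r lam).
Proof.
  intros Hx Hxy Hlt.
  destruct (nfloor_spec x Hx) as [HNx HxN].
  destruct (nfloor_spec y ltac:(lra)) as [_ HMy].
  assert (HNM : (nfloor x <= nfloor y)%nat) by (apply nfloor_ge; lra).
  unfold Lcount, range2 in Hlt.
  set (N := nfloor x) in *. set (M := nfloor y) in *.
  replace (M - 1)%nat with ((N - 1) + (M - 1 - (N - 1)))%nat in Hlt by lia.
  rewrite seq_app, filter_app, length_app in Hlt.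
  set (isp := fun r : nat => primeb (gfermat (Z.of_nat r) lam)) in Hlt.
  destruct (filter isp (seq (2 + (N - 1)) (M - 1 - (N - 1)))) as [|r rs] eqn:Hfil;
    [simpl in Hlt; lia|].
  assert (Hr : In r (filter isp (seq (2 + (N - 1)) (M - 1 - (N - 1))))) by (rewrite Hfil; now left).
  apply filter_In in Hr as [Hr Hp]. apply in_seq in Hr.
  exists (Z.of_nat r). rewrite <- INR_IZR_INZ. split; [split|].
  - apply Rlt_le_trans with (INR (S N)); [rewrite S_INR; lra|]. apply le_INR; lia.
  - apply Rle_trans with (INR M); [apply le_INR; lia | exact HMy].
  - unfold isp, primeb in Hp. destruct prime_dec; [assumption | discriminate].
Qed.

Theorem proposition4p3 :
  HypothesisH ->
  forall lam : nat, (1 <= lam)%nat ->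
    exists B : R, B >= 2 ^ lam /\
      forall x : R, x > B ->
        exists r : Z, x <= IZR r <= x * (1 + INR lam ^ 2) /\
          prime (gfermat r lam).
Proof.
  intros HH lam Hlam.
  destruct (HH lam Hlam) as [C [HC [_ Hasymp]]].
  destruct (asymp_lt_of_ratio_ge _ _ (9 / 8) ltac:(lra) Hasymp) as [x0 Hx0].
  destruct sum_inv_ln_growth as [N1 HN1].
  set (B := Rmax (2 ^ lam) (Rmax x0 (INR (Nat.max N1 2)))).
  assert (HB1 : 2 ^ lam <= B) by apply Rmax_l.
  assert (HB2 : x0 <= B /\ INR (Nat.max N1 2) <= B)
    by (split; eapply Rle_trans; [apply Rmax_l | apply Rmax_r | apply Rmax_r | apply Rmax_r]).
  exists B. split; [lra|]. intros x Hx.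
  assert (Hpow : 0 < 2 ^ lam) by (apply pow_lt; lra).
  assert (Hlam2 : 1 <= INR lam ^ 2) by (apply le_INR in Hlam; simpl in *; nra).
  set (y := x * (1 + INR lam ^ 2)).
  assert (Hxy : 2 * x <= y) by (unfold y; nra).
  assert (HN : (Nat.max N1 2 <= nfloor x)%nat) by (apply nfloor_ge; lra).
  assert (HNM : (2 * nfloor x <= nfloor y)%nat).
  { apply nfloor_ge. rewrite mult_INR. destruct (nfloor_spec x ltac:(lra)). simpl. lra. }
  destruct (Lcount_lt_gfermat_prime x y lam) as [r [[Hr1 Hr2] Hp]]; try lra.
  - apply INR_lt, Hx0; try lra; rewrite !Eapprox_sum_inv_ln.
    + apply Rmult_lt_0_compat; [apply Rdiv_lt_0_compat; lra | apply sum_inv_ln_pos; lia].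
    + rewrite <- Rmult_assoc, (Rmult_comm (9 / 8)), Rmult_assoc.
      apply Rmult_le_compat_l; [apply Rlt_le, Rdiv_lt_0_compat; lra | apply HN1; lia].
  - exists r. split; [split|]; [lra | exact Hr2 | exact Hp].
Qed.
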